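(* Let $(L,\le,\bot,\top)$ be a complete lattice and $(\&_i,\swarrow^i,\nwarrow_i)$, $i=1,\dots,n$, adjoint triples on $L$ with $x\,\&_i\,\top=\top\,\&_i\,x=x$ for all $x\in L$ and all $i$. Let $(A,B,R,\sigma)$ be a normalized context having a decomposition into independent subcontexts $\{(A_\lambda,B_\lambda,R_\lambda,\sigma_\lambda)\mid\lambda\in\Lambda\}$. Let $\lambda\in\Lambda$, $a\in A_\lambda$ and $x\in L\setminus\{\bot\}$. Then for all $b\in B$, $$\phi_{a,x}^\downarrow(b)=\begin{cases}R(a,b)\nwarrow_{\sigma(a,b)}x & \text{if } b\in B_\lambda,\\ \bot&\text{otherwise.}\end{cases}$$
   Context: An adjoint triple on $L$ is a triple of maps $\&,\swarrow,\nwarrow\colon L\times L\to L$ with $x\le z\swarrow y\iff x\& y\le z\iff y\le z\nwarrow x$. A context is $(A,B,R,\sigma)$ with $A,B$ non-empty sets, $R\colon A\times B\to L$, $\sigma\colon A\times B\to\{1,\dots,n\}$; it is normalized if every $a\in A$ has $b_1,b_2$ with $R(a,b_1)\ne\bot$, $R(a,b_2)=\bot$, and every $b\in B$ has $a_1,a_2$ with $R(a_1,b)\neq\bot$, $R(a_2,b)=\bot$. For $f\colon A\to L$, $f^\downarrow(b)=\inf_{a\in A}R(a,b)\nwarrow_{\sigma(a,b)}f(a)$. The fuzzy-attribute $\phi_{a,x}\colon A\to L$ takes value $x$ at $a$ and $\bot$ elsewhere. A separable subcontext is a tuple $(Y,X,R_{Y\times X},\sigma_{Y\times X})$ (restrictions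 of $R,\sigma$) with $Y\subsetneq A$, $X\subsetneq B$ non-empty, some $a\in Y,b\in X$ with $R(a,b)\ne\bot$, $R(a,b')=\bot$ for all $(a,b')\in Y\times(B\setminus X)$, and $R(a',b)=\bot$ for all $(a',b)\in(A\setminus Y)\times X$. An operator $\&$ has zero-divisors if $x\&y=\bot$ for some $x\ne\bot$, $y\neq\bot$. The context has a decomposition into independent subcontexts $\{(A_\lambda,B_\lambda,R_\lambda,\sigma_\lambda)\mid\lambda\in\Lambda\}$ ($\Lambda$ non-empty, $R_\lambda,\sigma_\lambda$ restrictions to $A_\lambda\times B_\lambda$) if each tuple is a separable subcontext, the $A_\lambda$ are pairwise disjoint with union $A$, the $B_\lambda$ are pairwise disjoint with union $B$, and for every $\lambda$ and every $(a,b)\in((A\setminus A_\lambda)\times B_\lambda)\cup(A_\lambda\times(B\setminus B_\lambda))$ the conjunctor $\&_{\sigma(a,b)}$ has no zero-divisors. *)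

From HB Require Import structures.
From mathcomp Require Import all_boot all_order.
Set Implicit Arguments. Unset Strict Implicit. Unset Printing Implicit Defensive.
Import Order.TTheory.
Local Open Scope order_scope.

Section Defs.
Context {d : Order.disp_t} {L : tbLatticeType d}.

Definition is_glb (S : L -> Prop) (m : L) : Prop :=
  (forall y, S y -> m <= y) /\ (forall z, (forall y, S y -> z <= y) -> z <= m).

Definition complete_inf (inf : (L -> Prop) -> L) : Prop :=
  forall S, is_glb S (inf S).

(* (conj, sw, nw) is an adjoint triple on L:
   x <= z sw y  <->  conj x y <= z  <->  y <= z nw x  (here "z sw y" = sw z y) *)
Definition adjoint_triple (conj sw nw : L -> L -> L) : Prop :=
  forall x y z, (x <= sw z y <-> conj x y <= z) /\ (conj x y <= z <-> y <= nw z x).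

Definition has_zero_divisors (conj : L -> L -> L) : Prop :=
  exists x y, x <> \bot /\ y <> \bot /\ conj x y = \bot.

Variables (n : nat) (A : eqType) (B : Type).
Variables (R : A -> B -> L) (sigma : A -> B -> 'I_n).

Definition is_context : Prop := (exists a : A, True) /\ (exists b : B, True).

Definition normalized : Prop :=
  (forall a, (exists b1, R a b1 <> \bot) /\ (exists b2, R a b2 = \bot)) /\
  (forall b, (exists a1, R a1 b <> \bot) /\ (exists a2, R a2 b = \bot)).

Definition down (inf : (L -> Prop) -> L) (nw : 'I_n -> L -> L -> L)
  (f : A -> L) (b : B) : L :=
  inf (fun y => exists a : A, y = nw (sigma a b) (R a b) (f a)).

Definition phi (a : A) (x : L) : A -> L := fun a' => if a' == a then x else \bot.

Definition separable_subcontext (Y : A -> Prop) (X : B -> Prop) : Prop :=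
  (exists a, ~ Y a) /\ (exists b, ~ X b) /\
  (exists a, Y a) /\ (exists b, X b) /\
  (exists a b, Y a /\ X b /\ R a b <> \bot) /\
  (forall a b', Y a -> ~ X b' -> R a b' = \bot) /\
  (forall a' b, ~ Y a' -> X b -> R a' b = \bot).

Definition independent_decomposition (conj : 'I_n -> L -> L -> L)
  (Lam : Type) (AL : Lam -> A -> Prop) (BL : Lam -> B -> Prop) : Prop :=
  (exists l : Lam, True) /\
  (forall l, separable_subcontext (AL l) (BL l)) /\
  (forall l1 l2 a, l1 <> l2 -> AL l1 a -> AL l2 a -> False) /\
  (forall a, exists l, AL l a) /\
  (forall l1 l2 b, l1 <> l2 -> BL l1 b -> BL l2 b -> False) /\
  (forall b, exists l, BL l b) /\
  (forall l a b, ((~ AL l a /\ BL l b) \/ (AL l a /\ ~ BL l b)) ->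
     ~ has_zero_divisors (conj (sigma a b))).

End Defs.

(* Write [r \ x] for the residuum [nw (sigma a' b) r x].  Adjointness gives
   [r \ bot = top] for every [r], so in the infimum defining [phi_{a,x}^down b]
   only the term of index [a] survives and the value is [R a b \ x].  If [b]
   lies outside [B_lambda], separability gives [R a b = bot], and
   [y := bot \ x] satisfies [x & y <= bot]; as [&] has no zero-divisors on
   such pairs and [x <> bot], we get [y = bot]. *)

From HB Require Import structures.
From mathcomp Require Import all_boot all_order.
Set Implicit Arguments. Unset Strict Implicit. Unset Printing Implicit Defensive.
Import Order.TTheory.
Local Open Scope order_scope.

Lemma is_glb_least d (L : tbLatticeType d) (S : L -> Prop) (m y0 : L) :
  is_glb S m -> S y0 -> (forall y, S y -> y0 <= y) -> m = y0.
Proof.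
move=> [lbm glbm] Sy0 lby0.
by apply/eqP; rewrite eq_le lbm //= glbm.
Qed.

Section AdjointTriple.
Variables (d : Order.disp_t) (L : tbLatticeType d) (conj sw nw : L -> L -> L).
Hypothesis adj : adjoint_triple conj sw nw.

Lemma le_nw x y z : (y <= nw z x) = (conj x y <= z).
Proof. by apply/idP/idP => /(proj2 (adj x y z)). Qed.

Lemma nw_bot z : nw z \bot = \top.
Proof.
apply/eqP; rewrite eq_le lex1 le_nw.
by apply/(proj1 (adj _ _ _)); rewrite le0x.
Qed.

Lemma bot_nw_eq0 x : ~ has_zero_divisors conj -> x <> \bot -> nw \bot x = \bot.
Proof.
move=> no_zd x_neq0; case: (eqVneq (nw \bot x) \bot) => // /eqP nw_neq0.
case: no_zd; exists x, (nw \bot x); split=> //; split=> //.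
by apply/eqP; rewrite -lex0 -le_nw.
Qed.

End AdjointTriple.

Section Decomposition.
Variables (d : Order.disp_t) (L : tbLatticeType d) (n : nat) (A : eqType) (B : Type).
Variables (R : A -> B -> L) (sigma : A -> B -> 'I_n).

Lemma down_phi (inf : (L -> Prop) -> L) (nw : 'I_n -> L -> L -> L) a x b :
  complete_inf inf -> (forall i z, nw i z \bot = \top) ->
  down R sigma inf nw (phi a x) b = nw (sigma a b) (R a b) x.
Proof.
move=> inf_glb nw_bot_top; apply: is_glb_least (inf_glb _) _ _.
  by exists a; rewrite /phi eqxx.
move=> _ [a' ->]; rewrite /phi; case: eqP => [-> // | _].
by rewrite nw_bot_top lex1.
Qed.

Lemma independent_decomposition_cross conj (Lam : Type)
    (AL : Lam -> A -> Prop) (BL : Lam -> B -> Prop) l a b :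
  independent_decomposition R sigma conj AL BL -> AL l a -> ~ BL l b ->
  R a b = \bot /\ ~ has_zero_divisors (conj (sigma a b)).
Proof.
move=> [_ [sep [_ [_ [_ [_ no_zd]]]]]] ALa notBLb.
have [_ [_ [_ [_ [_ [R_out _]]]]]] := sep l.
split; first exact: R_out.
by apply: (no_zd l); right.
Qed.

End Decomposition.

Theorem lemma29 (d : Order.disp_t) (L : tbLatticeType d)
  (inf : (L -> Prop) -> L) (Hcomplete : complete_inf inf)
  (n : nat) (conj sw nw : 'I_n -> L -> L -> L)
  (Hadj : forall i, adjoint_triple (conj i) (sw i) (nw i))
  (Hunit : forall i x, conj i x \top = x /\ conj i \top x = x)
  (A : eqType) (B : Type) (R : A -> B -> L) (sigma : A -> B -> 'I_n)
  (Hctx : is_context A B)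
  (Hnorm : normalized R)
  (Lam : Type) (AL : Lam -> A -> Prop) (BL : Lam -> B -> Prop)
  (Hdec : independent_decomposition R sigma conj AL BL)
  (l : Lam) (a : A) (Ha : AL l a) (x : L) (Hx : x <> \bot) :
  forall b : B,
    (BL l b -> down R sigma inf nw (phi a x) b = nw (sigma a b) (R a b) x) /\
    (~ BL l b -> down R sigma inf nw (phi a x) b = \bot).
Proof.
move=> b; have down_eq := down_phi R sigma a x b Hcomplete (fun i => nw_bot (Hadj i)).
split=> [_ | notBLb]; first exact: down_eq.
have [Rab_eq0 no_zd] := independent_decomposition_cross Hdec Ha notBLb.
by rewrite down_eq Rab_eq0 (bot_nw_eq0 (Hadj _)).
Qed.
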